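(* Let $X$ be a topological space, $\sigma : X\to X$ a homeomorphism, and $\widetilde{\sigma}(f) = f\circ\sigma^{-1}$ the induced automorphism of $C(X)$. Let $A$ be a non-zero subalgebra of $C(X)$ invariant under $\widetilde{\sigma}$ and $\widetilde{\sigma}^{-1}$, which separates the points of $X$ and is such that every non-empty open set $U\subseteq X$ is a domain of uniqueness for $A$. Then $A$ is maximal abelian in $A\rtimes_{\widetilde{\sigma}}\mathbb{Z}$ if and only if $\sigma$ is not of finite order (i.e. $\sigma^n\neq \mathrm{id}_X$ for every non-zero integer $n$).
   Context: A non-empty subset $S\subseteq X$ is a domain of uniqueness for $A$ if every function in $A$ vanishing on $S$ vanishes on all of $X$. The crossed product $A \rtimes_{\widetilde{\sigma}} \mathbb{Z}$ is the set of finitely supported functions $\mathbb{Z}\to A$, written $\sum_n f_n\delta^n$, with pointwise linear operations and multiplication determined by $(f_n\delta^n)*(g_m\delta^m)=f_n\,\widetilde{\sigma}^n(g_m)\,\delta^{n+m}$; $A$ is embedded as $\{f_0\delta^0\}$. *)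

(* C(X) = continuous maps X -> R[i],
   with R : realType (so R[i] is the field of complex numbers). *)
From HB Require Import structures.
From mathcomp Require Import all_boot all_order all_algebra.
From mathcomp Require Import all_classical all_reals all_analysis.
From mathcomp Require Export complex.
Export numFieldTopology.Exports.

Set Implicit Arguments.
Unset Strict Implicit.
Unset Printing Implicit Defensive.
Import Order.TTheory GRing.Theory Num.Theory.
Local Open Scope classical_set_scope.
Local Open Scope ring_scope.
Local Open Scope complex_scope.

#[non_forgetful_inheritance]
HB.instance Definition _ (R : rcfType) :=
  PseudoPointedMetric.copy (R[i]) (R[i])^o.

Section Defs.
Variables (R : realType) (X : topologicalType).
Notation C := (R[i]).

Definition zpow (s sinv : X -> X) (n : int) : X -> X :=
  match n with
  | Posz k => iter k s
  | Negz k => iter k.+1 sinv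
  end.

Definition sigt_pow (s sinv : X -> X) (n : int) (f : X -> C) : X -> C :=
  f \o zpow s sinv (- n).

(* A is a (not necessarily unital) complex subalgebra of the functions X -> C *)
Definition is_subalgebra (A : set (X -> C)) : Prop :=
  [/\ A (fun _ => 0),
      (forall f g, A f -> A g -> A (fun x => f x + g x)),
      (forall (c : C) f, A f -> A (fun x => c * f x)) &
      (forall f g, A f -> A g -> A (fun x => f x * g x))].

Definition in_CX (A : set (X -> C)) : Prop := forall f, A f -> continuous f.

Definition nonzero_set (A : set (X -> C)) : Prop :=
  exists f, A f /\ exists x, f x != 0.

Definition separates_points (A : set (X -> C)) : Prop :=
  forall x y : X, x <> y -> exists f, A f /\ f x != f y.

Definition domain_of_uniqueness (A : set (X -> C)) (S : set X) : Prop :=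
  S !=set0 /\
  forall f, A f -> (forall x, S x -> f x = 0) -> forall x, f x = 0.

(* crossed product A x|_{sigma~} Z: finitely supported functions Z -> A,
   an element F stands for sum_n F n delta^n *)
Definition crossed_product (A : set (X -> C)) : set (int -> X -> C) :=
  [set F | finite_set [set n | exists x, F n x != 0] /\ forall n, A (F n)].

(* (sum_n F n delta^n) * (sum_m G m delta^m), coefficient of delta^k is
   sum_n F n * sigma~^n (G (k - n)) *)
Definition cp_mul (s sinv : X -> X) (F G : int -> X -> C) : int -> X -> C :=
  fun k x => \sum_(n \in [set: int]) F n x * sigt_pow s sinv n (G (k - n)) x.

Definition cp_add (F G : int -> X -> C) : int -> X -> C :=
  fun k x => F k x + G k x.

Definition cp_scale (c : C) (F : int -> X -> C) : int -> X -> C :=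
  fun k x => c * F k x.

Definition cp_zero : int -> X -> C := fun _ _ => 0.

Definition cp_emb (f : X -> C) : int -> X -> C :=
  fun n => if n == 0 then f else (fun _ => 0).

Definition cp_subalgebra (s sinv : X -> X) (A : set (X -> C))
    (B : set (int -> X -> C)) : Prop :=
  [/\ B `<=` crossed_product A,
      B cp_zero,
      (forall F G, B F -> B G -> B (cp_add F G)),
      (forall c F, B F -> B (cp_scale c F)) &
      (forall F G, B F -> B G -> B (cp_mul s sinv F G))].

Definition cp_commutative (s sinv : X -> X) (B : set (int -> X -> C)) : Prop :=
  forall F G, B F -> B G -> cp_mul s sinv F G = cp_mul s sinv G F.

Definition maximal_abelian (s sinv : X -> X) (A : set (X -> C)) : Prop :=
  cp_commutative s sinv (cp_emb @` A) /\
  forall B, cp_subalgebra s sinv A B -> cp_emb @` A `<=` B ->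
    cp_commutative s sinv B -> B `<=` cp_emb @` A.

End Defs.

From HB Require Import structures.
From mathcomp Require Import all_boot all_order all_algebra.
From mathcomp Require Import all_classical all_reals all_analysis.
From mathcomp Require Import complex.
From mathcomp Require Import zify.
Import numFieldTopology.Exports.
Import Order.TTheory GRing.Theory Num.Theory.
Local Open Scope classical_set_scope.
Local Open Scope ring_scope.
Local Open Scope complex_scope.

Set Implicit Arguments.
Unset Strict Implicit.
Unset Printing Implicit Defensive.

(* If [sigma^n = id] with [n != 0], the elements of the crossed product
   supported on the period group of [sigma] form a commutative subalgebra:
   on them [sigma~] acts trivially, so the product is a plain convolution.
   It contains [f delta^n] for any non-zero [f] of [A], so [A] is not maximal
   abelian.  Conversely, if [F] commutes with every [g delta^0], comparing
   the coefficients of [delta^k] gives [F_k (g - g o sigma^-k) = 0]; the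
   support of [F_k] is open, hence a domain of uniqueness as soon as it is
   non-empty, so [g = g o sigma^-k] on [X] for all [g] in [A], and point
   separation yields [sigma^-k = id].  So if [sigma] has infinite order,
   [F] is [F_0 delta^0]. *)

Section IntegerPowers.
Variables (X : topologicalType) (s sinv : X -> X).
Hypotheses (sK : cancel s sinv) (sinvK : cancel sinv s).
Local Notation zp := (zpow s sinv).

Lemma zpowS (n : int) x : zp (n + 1) x = s (zp n x).
Proof.
case: n => [k|[|k]].
- by have -> : Posz k + 1 = Posz k.+1 by rewrite -addn1 PoszD.
- by rewrite /= sinvK.
- have -> : Negz k.+1 + 1 = Negz k by rewrite !NegzE; lia.
  by rewrite /= sinvK.
Qed.

Lemma zpowB1 (n : int) x : zp (n - 1) x = sinv (zp n x).
Proof. by rewrite -{2}(subrK 1 n) zpowS sK. Qed.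

Lemma zpowD (m n : int) x : zp (m + n) x = zp m (zp n x).
Proof.
elim/int_rec: m n x => [|m IH|m IH] n x.
- by rewrite add0r.
- have -> : m.+1%:Z + n = (m%:Z + n) + 1 by rewrite -addn1 PoszD; lia.
  by rewrite zpowS IH -zpowS -addn1 PoszD.
- have -> : - m.+1%:Z + n = (- m%:Z + n) - 1 by rewrite -addn1 PoszD; lia.
  by rewrite zpowB1 IH -zpowB1 -addn1 PoszD opprD.
Qed.

Definition zpow_period (n : int) : Prop := zp n =1 id.

Lemma zpow_periodD (m n : int) :
  zpow_period m -> zpow_period n -> zpow_period (m + n).
Proof. by move=> pm pn x; rewrite zpowD pn pm. Qed.

Lemma zpow_periodN (n : int) : zpow_period n -> zpow_period (- n).
Proof. by move=> pn x; rewrite -{1}(pn x) -zpowD addNr. Qed.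

End IntegerPowers.

Lemma fsbigT1 (T : choiceType) (V : nmodType) (F : T -> V) (k : T) :
  (forall i, i != k -> F i = 0) -> \sum_(i \in [set: T]) F i = F k.
Proof.
move=> Fk; rewrite -(fsbig_widen [set k]) ?fsbig_set1 // => i [_ /eqP ik].
exact: Fk.
Qed.

Lemma open_neq0 (R : realType) : open [set z : R[i] | z != 0].
Proof.
have hausC : hausdorff_space R[i] by exact: (@norm_hausdorff _ R[i]^o).
have := closed_openC
  (accessible_closed_set1 (hausdorff_accessible hausC) (x := 0)).
by congr open; apply/seteqP; split => z /= /eqP.
Qed.

Section CrossedProduct.
Variables (R : realType) (X : topologicalType) (s sinv : X -> X).
Hypotheses (sK : cancel s sinv) (sinvK : cancel sinv s).
Local Notation C := (R[i]).
Local Notation zp := (zpow s sinv).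
Local Notation period := (zpow_period s sinv).
Local Notation cpmul := (cp_mul s sinv).
Implicit Types (F G : int -> X -> C) (f g : X -> C).

Definition cp_support (F : int -> X -> C) : set int :=
  [set n | exists x, F n x != 0].

(* [cp_mono n f] is [f delta^n]; [cp_emb f] is [cp_mono 0 f] by conversion. *)
Definition cp_mono (n : int) (f : X -> C) : int -> X -> C :=
  fun k => if k == n then f else (fun _ => 0).

Lemma cp_support_mono n f : cp_support (cp_mono n f) `<=` [set n].
Proof.
move=> k [x]; rewrite /cp_mono.
by case: (k =P n) => [-> // | _ /=]; rewrite eqxx.
Qed.

Lemma cp_support_add F G :
  cp_support (cp_add F G) `<=` cp_support F `|` cp_support G.
Proof.
move=> k [x]; rewrite /cp_add; have [Fk|Fk] := eqVneq (F k x) 0.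
  by rewrite Fk add0r => Gk; right; exists x.
by left; exists x.
Qed.

Lemma cp_support_scale c F : cp_support (cp_scale c F) `<=` cp_support F.
Proof.
move=> k [x]; rewrite /cp_scale => cF; exists x.
by move: cF; apply: contra_neq => ->; rewrite mulr0.
Qed.

Lemma cp_support_mul F G k : cp_support (cpmul F G) k ->
  exists2 a, cp_support F a & cp_support G (k - a).
Proof.
case=> x FGx.
have [a FG] : exists a, F a x * sigt_pow s sinv a (G (k - a)) x != 0.
  apply: contrapT => /forallNP FG0; move: FGx; rewrite /cp_mul fsbig1 ?eqxx //.
  by move=> a _; apply/eqP/negPn/negP/FG0.
exists a; first by exists x; move: FG; apply: contra_neq => ->; rewrite mul0r.
exists (zp (- a) x); move: FG; rewrite /sigt_pow /=.
by apply: contra_neq => ->; rewrite mulr0.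
Qed.

Lemma finite_cp_support_mul F G : finite_set (cp_support F) ->
  finite_set (cp_support G) -> finite_set (cp_support (cpmul F G)).
Proof.
move=> finF finG.
apply: sub_finite_set
  (finite_image (fun p => p.1 + p.2) (finite_setX finF finG)).
move=> k /cp_support_mul [a Fa Gka]; exists (a, k - a) => //=.
by rewrite addrC subrK.
Qed.

Lemma cp_mul_embl f G k x : (cpmul (cp_emb f) G) k x = f x * G k x.
Proof.
rewrite /cp_mul (@fsbigT1 _ _ _ 0) => [|i /negbTE i0]; last first.
  by rewrite /cp_emb i0 mul0r.
by rewrite /cp_emb eqxx /sigt_pow oppr0 subr0.
Qed.

Lemma cp_mul_embr F g k x :
  (cpmul F (cp_emb g)) k x = F k x * g (zp (- k) x).
Proof.
rewrite /cp_mul (@fsbigT1 _ _ _ k) => [|i ik]; last first.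
  by rewrite /cp_emb /sigt_pow /= subr_eq0 eq_sym (negbTE ik) mulr0.
by rewrite /cp_emb subrr eqxx.
Qed.

Lemma cp_emb_commutative (A : set (X -> C)) :
  cp_commutative s sinv (@cp_emb R X @` A).
Proof.
move=> _ _ [f _ <-] [g _ <-]; apply/funext => k; apply/funext => x.
rewrite !cp_mul_embl /cp_emb.
by case: eqP => _; [exact: mulrC | rewrite !mulr0].
Qed.

Lemma cp_commute_emb g F k x : cpmul (cp_emb g) F = cpmul F (cp_emb g) ->
  F k x != 0 -> g (zp (- k) x) = g x.
Proof.
move=> /(congr1 (fun H => H k x)).
rewrite cp_mul_embl cp_mul_embr mulrC => gF Fk.
exact/esym/(mulfI Fk).
Qed.

Lemma cp_mul_periodE F G k x : cp_support F `<=` period ->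
  (cpmul F G) k x = \sum_(a \in [set: int]) F a x * G (k - a) x.
Proof.
move=> pF; apply: eq_fsbigr => a _; have [->|Fa] := eqVneq (F a x) 0.
  by rewrite !mul0r.
by rewrite /sigt_pow /= (zpow_periodN sK sinvK) //; apply: pF; exists x.
Qed.

Lemma cp_mul_periodC F G : cp_support F `<=` period ->
  cp_support G `<=` period -> cpmul F G = cpmul G F.
Proof.
move=> pF pG; apply/funext => k; apply/funext => x.
rewrite !cp_mul_periodE // (reindex_fsbigT (fun a => k - a)); last first.
  by exists (fun a => k - a) => a; rewrite opprB addrC subrK.
by apply: eq_fsbigr => a _; rewrite mulrC opprB addrC subrK.
Qed.

Section Subalgebra.
Variable A : set (X -> C).
Hypothesis hA : is_subalgebra A.
Hypothesis hinv :
  forall f, A f -> A (sigt_pow s sinv 1 f) /\ A (sigt_pow s sinv (-1) f).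

Lemma subalgebra_sum (I : Type) (r : seq I) (h : I -> X -> C) :
  (forall i, A (h i)) -> A (fun x => \sum_(i <- r) h i x).
Proof.
case: hA => A0 AD _ _ Ah; elim: r => [|i r IH].
  by under eq_fun do rewrite big_nil.
by under eq_fun do rewrite big_cons; exact: AD.
Qed.

Lemma subalgebra_sub f g : A f -> A g -> A (fun x => f x - g x).
Proof.
case: hA => _ AD AZ _ Af Ag; under eq_fun do rewrite -mulN1r.
exact/AD/AZ.
Qed.

Lemma subalgebra_comp_zpow (m : int) g : A g -> A (g \o zp m).
Proof.
have As k f : A f -> A (f \o iter k s).
  elim: k f => [|k IH] f Af //; have := IH _ (hinv Af).2.
  by rewrite /sigt_pow opprK.
have Asinv k f : A f -> A (f \o iter k sinv).
  by elim: k f => [|k IH] f Af //; exact: IH _ (hinv Af).1.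
by case: m => k; [apply: As | apply: Asinv].
Qed.

Lemma subalgebra_sigt_pow (n : int) f : A f -> A (sigt_pow s sinv n f).
Proof. exact: subalgebra_comp_zpow. Qed.

Lemma domain_of_uniquenessP U f g : domain_of_uniqueness A U ->
  A f -> A g -> (forall x, U x -> f x = g x) -> f =1 g.
Proof.
move=> [_ uniqU] Af Ag fg x; apply/eqP; rewrite -subr_eq0; apply/eqP.
by apply: (uniqU _ (subalgebra_sub Af Ag)) => y /fg ->; rewrite subrr.
Qed.

Lemma separates_points_id (phi : X -> X) : separates_points A ->
  (forall g, A g -> forall x, g (phi x) = g x) -> phi =1 id.
Proof.
move=> sepA phiA x; apply: contrapT => /sepA [g [Ag]].
by rewrite phiA // eqxx.
Qed.

Lemma crossed_product_mono n f : A f -> crossed_product A (cp_mono n f).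
Proof.
case: hA => A0 _ _ _ Af; split.
  exact: sub_finite_set (@cp_support_mono n f) (finite_set1 n).
by move=> k; rewrite /cp_mono; case: eqP.
Qed.

Lemma crossed_product_mul F G : crossed_product A F ->
  crossed_product A G -> crossed_product A (cpmul F G).
Proof.
move=> [finF AF] [finG AG]; split; first exact: finite_cp_support_mul.
move=> k; have -> : (cpmul F G) k = fun x => \sum_(a <- finmap.enum_fset
    (fset_set (cp_support F))) F a x * sigt_pow s sinv a (G (k - a)) x.
  apply/funext => x; rewrite /cp_mul (fsbigTE (fset_set (cp_support F))) //.
  move=> a.
  rewrite in_fset_set // notin_setE => Fa.
  have -> : F a x = 0 by apply/eqP/negPn/negP => Fax; apply: Fa; exists x.
  exact: mul0r.
case: hA => _ _ _ AM; apply: subalgebra_sum => a.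
exact/AM/subalgebra_sigt_pow.
Qed.

Lemma crossed_product_subalgebra : cp_subalgebra s sinv A (crossed_product A).
Proof.
case: hA => A0 AD AZ _; split => //.
- split=> //; apply: (sub_finite_set (B := set0)) => [k [x] | //].
  by rewrite /cp_zero eqxx.
- move=> F G [finF AF] [finG AG]; split=> [|k]; last exact: AD.
  by apply: sub_finite_set (@cp_support_add F G) _; rewrite finite_setU.
- move=> c F [finF AF]; split=> [|k]; last exact: AZ.
  exact: sub_finite_set (@cp_support_scale c F) finF.
- exact: crossed_product_mul.
Qed.

Definition cp_periodic : set (int -> X -> C) :=
  [set F | crossed_product A F /\ cp_support F `<=` period].

Lemma cp_periodic_subalgebra : cp_subalgebra s sinv A cp_periodic.
Proof.
have [_ cp0 cpD cpZ cpM] := crossed_product_subalgebra.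
split.
- by move=> F [].
- by split=> // k [x]; rewrite /cp_zero eqxx.
- move=> F G [cF pF] [cG pG]; split; first exact: cpD.
  by move=> k /cp_support_add [/pF | /pG].
- move=> c F [cF pF]; split; first exact: cpZ.
  by move=> k /cp_support_scale /pF.
- move=> F G [cF pF] [cG pG]; split; first exact: cpM.
  move=> k /cp_support_mul [a /pF pa /pG pka].
  by rewrite -(subrK a k) addrC; exact: zpow_periodD.
Qed.

Lemma cp_periodic_commutative : cp_commutative s sinv cp_periodic.
Proof. by move=> F G [_ pF] [_ pG]; exact: cp_mul_periodC. Qed.

Lemma cp_emb_periodic : @cp_emb R X @` A `<=` cp_periodic.
Proof.
move=> _ [g Ag <-]; split; first exact: (crossed_product_mono 0 Ag).
by move=> k /(@cp_support_mono 0 g) ->.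
Qed.

Lemma not_maximal_abelian_period n : nonzero_set A -> n != 0 ->
  period n -> ~ maximal_abelian s sinv A.
Proof.
move=> [f [Af [x fx]]] n0 pn [_ maxA].
have Bfn : cp_periodic (cp_mono n f).
  by split; [exact: crossed_product_mono | move=> k /cp_support_mono ->].
have [g _ /(congr1 (fun F => F n x))] := maxA _ cp_periodic_subalgebra
  cp_emb_periodic cp_periodic_commutative _ Bfn.
by rewrite /cp_emb /cp_mono (negbTE n0) eqxx => /esym/eqP; rewrite (negbTE fx).
Qed.

Section Aperiodic.
Hypothesis hAC : in_CX A.
Hypothesis hsep : separates_points A.
Hypothesis huniq :
  forall U : set X, open U -> U !=set0 -> domain_of_uniqueness A U.
Hypothesis aperiodic : forall n : int, n != 0 -> zp n <> id.

Lemma open_cp_support_coef F k : crossed_product A F ->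
  open [set x | F k x != 0].
Proof.
move=> [_ AF]; apply: (open_comp _ (@open_neq0 R)) => x _.
exact: hAC (AF k) x.
Qed.

Lemma cp_commutant_emb F : crossed_product A F ->
  (forall g, A g -> cpmul (cp_emb g) F = cpmul F (cp_emb g)) ->
  F = cp_emb (F 0).
Proof.
move=> cF comm; suff Fk0 k : k != 0 -> F k =1 (fun _ => 0).
  apply/funext => k; rewrite /cp_emb; case: eqP => [-> // | /eqP k0].
  exact/funext/Fk0.
move=> k0 x0; apply: contrapT => /eqP Fx0.
have uniqU := huniq (open_cp_support_coef k cF) (ex_intro _ x0 Fx0).
apply: (aperiodic (n := - k)); first by rewrite oppr_eq0.
apply/funext/separates_points_id => // g Ag.
apply: (domain_of_uniquenessP uniqU (subalgebra_comp_zpow _ Ag) Ag) => x Fx.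
exact: cp_commute_emb (comm _ Ag) Fx.
Qed.

Lemma maximal_abelian_aperiodic : maximal_abelian s sinv A.
Proof.
split; first exact: cp_emb_commutative.
move=> B [BA _ _ _ _] AB Bcomm F BF; exists (F 0); first exact: (BA F BF).2.
apply/esym/cp_commutant_emb; first exact: BA.
by move=> g Ag; apply: Bcomm => //; apply: AB; exists g.
Qed.

End Aperiodic.
End Subalgebra.
End CrossedProduct.

Theorem theorem3p11 (R : realType) (X : topologicalType)
  (s sinv : X -> X)
  (hs1 : cancel s sinv) (hs2 : cancel sinv s)
  (hsc : continuous s) (hsic : continuous sinv)
  (A : set (X -> R[i]))
  (hA : is_subalgebra A) (hAC : in_CX A) (hA0 : nonzero_set A)
  (hinv : forall f, A f -> A (sigt_pow s sinv 1 f) /\ A (sigt_pow s sinv (-1) f))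
  (hsep : separates_points A)
  (huniq : forall U : set X, open U -> U !=set0 -> domain_of_uniqueness A U) :
  maximal_abelian s sinv A <-> (forall n : int, n != 0 -> zpow s sinv n <> id).
Proof.
split=> [maxA n n0 sn | aperiodic]; last exact: maximal_abelian_aperiodic.
apply: (not_maximal_abelian_period hs1 hs2 hA hinv hA0 n0 _ maxA) => x.
by rewrite sn.
Qed.
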